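(* Let $K$ be a CMI in pure form. Then $K=(\cdot,\langle\ \rangle)$ (i.e., $K$ is degenerate) if and only if $\mathrm{can}(K)=(\cdot,\langle\ \rangle)$.
   Context: Setting: $X_1,\dots,X_n$ jointly distributed discrete random variables with $H(X_i)<\infty$; distribution unspecified. $X_\alpha=(X_i,i\in\alpha)$, $X_\emptyset$ constant. A CMI is $K=(C,\langle Q_1,\dots,Q_k\rangle)$, $k\ge0$, $C\subseteq\{1,\dots,n\}$, $\langle\cdot\rangle$ an unordered multiset of subsets; valid (for a given distribution) if $\sum_iH(X_{Q_i}|X_C)-H(X_{Q_1},\dots,X_{Q_k}|X_C)=0$. Empty members may be deleted. $K$ is degenerate if it is valid for every joint distribution; all degenerate CMIs are identified and written $(\cdot,\langle\ \rangle)$. Pure form: all $Q_i\ne\emptyset$ and $Q_i\cap C=\emptyset$. Canonical form of pure $K$: $\mathbb I_K$ = indices lying in at least two members (distinct positions) of the collection if $k\ge2$, else $\emptyset$; $P_1,\dots,P_t$ the nonempty sets among $Q_i\setminus\mathbb I_K$; $\mathrm{can}(K)=(\cdot,\langle\ \rangle)$ if $k\le1$; $(C,\langle\mathbb I_K,\mathbb I_K\rangle)$ if $k\ge2,\mathbb I_K\ne\emptyset,t\le1$; $(C,\langle P_1,\dots,P_t\rangle)$ if $k\ge2,\mathbb I_K=\emptyset$; $(C,\langle\mathbb I_K,\mathbb I_K,P_1,\dots,P_t\rangle)$ if $k\ge2,\mathbb I_K\ne\emptyset,t\ge2$. *)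

From HB Require Import structures.
From mathcomp Require Import all_boot all_order all_algebra.
From mathcomp Require Import all_classical all_reals.
From mathcomp Require Import ereal esum exp.
Set Implicit Arguments. Unset Strict Implicit. Unset Printing Implicit Defensive.
Import Order.TTheory GRing.Theory Num.Theory.
Local Open Scope classical_set_scope.
Local Open Scope ring_scope.

Section CMI.
Variables (R : realType) (n : nat).

(* A joint outcome of X_1,...,X_n.  Every discrete random variable takes
   countably many values, which we encode (injectively) as naturals;
   entropies are invariant under such relabelling. *)
Definition outcome := {ffun 'I_n -> nat}.

Definition is_dist (p : outcome -> R) : Prop :=
  (forall x, 0 <= p x) /\ (\esum_(x in [set: outcome]) (p x)%:E = 1%E).

(* projection onto the coordinates in A (other coordinates set to 0):
   the value of X_A *)
Definition proj (A : {set 'I_n}) (x : outcome) : outcome :=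
  [ffun i => if i \in A then x i else 0%N].

Definition marg (p : outcome -> R) (A : {set 'I_n}) (y : outcome) : R :=
  fine (\esum_(x in [set x | proj A x = y]) (p x)%:E).

Definition ent (p : outcome -> R) (A : {set 'I_n}) : \bar R :=
  \esum_(y in [set: outcome]) (- marg p A y * ln (marg p A y))%:E.

Definition fin_ent (p : outcome -> R) : Prop :=
  forall i : 'I_n, (ent p [set i] < +oo)%E.

(* real-valued entropy (all entropies used are finite under fin_ent) *)
Definition H (p : outcome -> R) (A : {set 'I_n}) : R := fine (ent p A).

Definition condH (p : outcome -> R) (A C : {set 'I_n}) : R :=
  H p (A :|: C) - H p C.

(* A CMI K = (C, <Q_1,...,Q_k>); the multiset is represented by a list,
   all notions below are invariant under permutation of the list. *)
Record cmi := CMI { cmiC : {set 'I_n}; cmiQ : seq {set 'I_n} }.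

Definition valid (p : outcome -> R) (K : cmi) : Prop :=
  \sum_(Q <- cmiQ K) condH p Q (cmiC K)
  - condH p (\big[@finset.setU _/finset.set0]_(Q <- cmiQ K) Q) (cmiC K) = 0.

Definition degenerate (K : cmi) : Prop :=
  forall p : outcome -> R, is_dist p -> fin_ent p -> valid p K.

Definition pure (K : cmi) : Prop :=
  forall Q, Q \in cmiQ K -> Q != finset.set0 /\ (Q :&: cmiC K == finset.set0).

(* Values of can(K): either the symbol (.,< >) (None) or a CMI (Some _).
   Under the paper's identification, "X = (.,< >)" means X is degenerate;
   the symbol itself is degenerate by definition. *)
Definition odegenerate (X : option cmi) : Prop :=
  match X with None => True | Some K => degenerate K end.

Definition IK (K : cmi) : {set 'I_n} :=
  if (2 <= size (cmiQ K))%N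
  then finset.finset (fun j : 'I_n => (2 <= count (fun Q : {set 'I_n} => j \in Q) (cmiQ K))%N)
  else finset.set0.

Definition Ps (K : cmi) : seq {set 'I_n} :=
  [seq P <- [seq Q :\: IK K | Q <- cmiQ K] | P != finset.set0].

Definition can (K : cmi) : option cmi :=
  if (size (cmiQ K) <= 1)%N then None
  else if IK K != finset.set0 then
         (if (size (Ps K) <= 1)%N then Some (CMI (cmiC K) [:: IK K; IK K])
          else Some (CMI (cmiC K) [:: IK K, IK K & Ps K]))
       else Some (CMI (cmiC K) (Ps K)).

End CMI.

From Pilot Require Import Defs.
From HB Require Import structures.
From mathcomp Require Import all_boot all_order all_algebra.
From mathcomp Require Import all_classical all_reals.
From mathcomp Require Import ereal esum exp.
Set Implicit Arguments. Unset Strict Implicit. Unset Printing Implicit Defensive.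
Import Order.TTheory GRing.Theory Num.Theory.
Local Open Scope ring_scope.

(* With at most one member the defining expression vanishes identically.
   Otherwise take all X_i with i outside C equal to one fair bit and all X_i
   with i in C constant: then H(X_Q | X_C) = ln 2 for every Q not contained
   in C, so a CMI all of whose members leave C has value (k - 1) ln 2 > 0.
   Members of a pure CMI leave C, so a pure K is degenerate iff k <= 1; and
   for k >= 2, can(K) is again pure with at least two members. *)

Section TwoPointSums.
Variables (R : realType) (T : choiceType).

Lemma esum_indicator (S : set T) (u : T) (c : R) : 0 <= c ->
  \esum_(x in S) ((x == u)%:R * c)%:E = ((u \in S)%:R * c)%:E.
Proof.
move=> c0; rewrite esum_mkcond.
rewrite -(@esum_set1 _ _ u (fun=> ((u \in S)%:R * c)%:E)) ?lee_fin ?mulr_ge0 //.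
rewrite [RHS]esum_mkcond; apply: eq_esum => x _.
by rewrite in_set1; case: (eqVneq x u) => [->|_]; case: ifP; rewrite ?mul0r.
Qed.

Lemma esum_pair (S : set T) (u v : T) (c : R) : 0 <= c ->
  \esum_(x in S) (((x == u)%:R + (x == v)%:R) * c)%:E
  = (((u \in S)%:R + (v \in S)%:R) * c)%:E.
Proof.
move=> c0; under eq_esum do rewrite mulrDl EFinD.
rewrite esumD ?esum_indicator ?mulrDl // => x _; rewrite lee_fin mulr_ge0 //.
Qed.

(* The uniform distribution on [{u, v}], which is the point mass at [u] when [u = v]. *)
Definition coin (u v x : T) : R := ((x == u)%:R + (x == v)%:R) / 2.

Lemma esum_coin (S : set T) (u v : T) :
  \esum_(x in S) (coin u v x)%:E = (((u \in S)%:R + (v \in S)%:R) / 2)%:E.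
Proof. by rewrite esum_pair. Qed.

Lemma coin_entropy_term (u v y : T) :
  - coin u v y * ln (coin u v y) = coin u v y * ((u != v)%:R * ln 2).
Proof.
have half_entropy : - (1 / 2) * ln (1 / 2) = 1 / 2 * (1 * ln 2) :> R.
  by rewrite div1r lnV ?posrE // mulrNN mul1r.
rewrite /coin; have [<-|uv] := eqVneq u v.
  case: (eqVneq y u) => _; last by rewrite /= !add0r !mul0r oppr0 mul0r.
  by rewrite -natrD divff ?pnatr_eq0 // ln1 mul0r !mulr0.
case: (y =P u) => [->|_]; first by rewrite (negbTE uv) addr0 /=; exact: half_entropy.
case: (y =P v) => _; first by rewrite add0r; exact: half_entropy.
by rewrite add0r !mul0r oppr0 mul0r.
Qed.

End TwoPointSums.

Section CoinEntropy.
Variables (R : realType) (n : nat).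
Implicit Types (u v : outcome n) (A : {set 'I_n}).

Lemma is_dist_coin u v : is_dist (coin R u v).
Proof.
split; first by move=> x; rewrite divr_ge0 ?addr_ge0.
by rewrite esum_coin !mem_setT -natrD divff ?pnatr_eq0.
Qed.

Lemma marg_coin u v A y :
  marg (coin R u v) A y = coin R (Defs.proj A u) (Defs.proj A v) y.
Proof.
have fiberE (x : outcome n) :
    (x \in [set x : outcome n | Defs.proj A x = y]%classic) = (Defs.proj A x == y).
  by apply/idP/eqP => [/set_mem|]; last exact: mem_set.
by rewrite /marg esum_coin !fiberE /coin /= !(eq_sym _ y).
Qed.

Lemma ent_coin u v A :
  ent (coin R u v) A = ((Defs.proj A u != Defs.proj A v)%:R * ln 2)%:E.
Proof.
rewrite /ent; under eq_esum do rewrite marg_coin coin_entropy_term /coin -mulrA.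
rewrite esum_pair ?mulr_ge0 ?invr_ge0 ?ln_ge0 ?ler1n // !mem_setT.
by rewrite mulrA -natrD divff ?pnatr_eq0 // mul1r.
Qed.

Lemma fin_ent_coin u v : fin_ent (coin R u v).
Proof. by move=> i; rewrite ent_coin ltry. Qed.

Lemma H_coin u v A :
  H (coin R u v) A = (Defs.proj A u != Defs.proj A v)%:R * ln 2.
Proof. by rewrite /H ent_coin. Qed.

Definition compl_indicator (C : {set 'I_n}) : outcome n :=
  [ffun i => nat_of_bool (i \notin C)].

Lemma proj_compl_indicator C A :
  (Defs.proj A [ffun=> 0%N] == Defs.proj A (compl_indicator C)) = (A \subset C).
Proof.
apply/eqP/fintype.subsetP => [eqA i iA|sAC].
  by move/ffunP/(_ i): eqA; rewrite !ffunE iA; case: (i \in C).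
by apply/ffunP => i; rewrite !ffunE; case: ifP => // /sAC ->.
Qed.

Definition coin_outside C := coin R [ffun=> 0%N] (compl_indicator C).

Lemma condH_coin_outside C Q :
  condH (coin_outside C) Q C = (~~ (Q \subset C))%:R * ln 2.
Proof.
rewrite /condH !H_coin !proj_compl_indicator finset.subUset subxx andbT /=.
by rewrite mul0r subr0.
Qed.

End CoinEntropy.

Section Degeneracy.
Variables (R : realType) (n : nat).
Implicit Types (C : {set 'I_n}) (L : seq {set 'I_n}) (K : cmi n).

Definition escapes C : pred {set 'I_n} := fun Q => ~~ (Q \subset C).

Lemma valid_coin_outside C L :
  valid (coin_outside R C) (CMI C L)
  <-> count (escapes C) L = escapes C (\big[@finset.setU _/finset.set0]_(Q <- L) Q) :> nat.
Proof.
have sum_escapes :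
    \sum_(Q <- L) condH (coin_outside R C) Q C = (count (escapes C) L)%:R * ln 2.
  rewrite -sum1_count natr_sum mulr_suml [RHS]big_mkcond; apply: eq_bigr => Q _.
  by rewrite condH_coin_outside /escapes; case: (~~ _); rewrite ?mul1r ?mul0r.
rewrite /valid /= sum_escapes condH_coin_outside -mulrBl.
split=> [/eqP|->]; last by rewrite subrr mul0r.
by rewrite mulf_eq0 (gt_eqF (ln_gt0 _)) ?ltr1n // orbF subr_eq0 eqr_nat => /eqP.
Qed.

Lemma valid_size_le1 (p : outcome n -> R) K : (size (cmiQ K) <= 1)%N -> valid p K.
Proof.
case: K => C [|Q [|]] //= _; rewrite /valid /condH /= ?big_cons !big_nil.
  by rewrite finset.set0U subrr subr0.
by rewrite finset.setU0 addr0 subrr.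
Qed.

Lemma degenerate_escapingE C L :
  all (escapes C) L -> degenerate R (CMI C L) <-> (size L <= 1)%N.
Proof.
move=> escL; split=> [deg|sL p _ _]; last exact: valid_size_le1.
have := (valid_coin_outside C L).1 (deg _ (is_dist_coin _ _ _) (fin_ent_coin _ _ _)).
move: (escL); rewrite all_count => /eqP ->.
case: L escL {deg} => [//|Q L] /= /andP[escQ _].
by rewrite big_cons /escapes finset.subUset (negbTE escQ) => -[->].
Qed.

Lemma pure_escapes K : pure K -> all (escapes (cmiC K)) (cmiQ K).
Proof.
move=> pK; apply/allP => Q /pK [Q0 /eqP QC0].
by apply: contraNN Q0 => /finset.setIidPl <-; rewrite QC0.
Qed.

Lemma pure_degenerateE K : pure K -> degenerate R K <-> (size (cmiQ K) <= 1)%N.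
Proof. by case: K => C L /pure_escapes; exact: degenerate_escapingE. Qed.

End Degeneracy.

Section CanonicalForm.
Variable n : nat.
Implicit Types K : cmi n.

Lemma can_eq_None K : can K = None <-> (size (cmiQ K) <= 1)%N.
Proof. by rewrite /can; case: leqP => //; do ?case: ifP. Qed.

Lemma pure_notin K Q j : pure K -> Q \in cmiQ K -> j \in Q -> j \notin cmiC K.
Proof.
move=> pK /pK [_ /eqP QC0] jQ; apply: contraT; rewrite negbK => jC.
by have := finset.in_set0 j; rewrite -QC0 !inE jQ jC.
Qed.

Lemma IK_disjoint K : pure K -> IK K :&: cmiC K == finset.set0.
Proof.
move=> pK; apply/finset.set0Pn => -[j]; rewrite !inE /IK => /andP[].
case: ifP => _; last by rewrite inE.
rewrite inE => count2.
have /hasP [Q QK jQ] : has (fun Q : {set 'I_n} => j \in Q) (cmiQ K).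
  by rewrite has_count (leq_trans _ count2).
by rewrite (negbTE (pure_notin pK QK jQ)).
Qed.

Lemma Ps_pure K P :
  pure K -> P \in Ps K -> P != finset.set0 /\ P :&: cmiC K == finset.set0.
Proof.
move=> pK; rewrite mem_filter => /andP[P0 /mapP [Q QK PE]]; subst P; split=> //.
apply/finset.set0Pn => -[j]; rewrite !inE => /andP[/andP[_ jQ]].
by rewrite (negbTE (pure_notin pK QK jQ)).
Qed.

Lemma Ps_IK0 K : pure K -> IK K = finset.set0 -> Ps K = cmiQ K.
Proof.
move=> pK IK0; rewrite /Ps IK0.
under eq_map do rewrite finset.setD0.
by rewrite map_id; apply/all_filterP/allP => Q /pK [].
Qed.

Lemma can_pure K K' : pure K -> can K = Some K' -> pure K'.
Proof.
move=> pK; rewrite /can; case: leqP => // _.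
have pure_Ps := Ps_pure pK.
case: ifP => [IK0|/negbFE/eqP IK0]; last by rewrite Ps_IK0 // => -[<-].
have pure_IK := conj IK0 (IK_disjoint pK).
case: ifP => _ [<-] Q /=; rewrite !inE; first by case/orP => /eqP ->.
by case/or3P => [/eqP ->|/eqP ->|/pure_Ps].
Qed.

Lemma can_size_gt1 K K' : pure K -> can K = Some K' -> (1 < size (cmiQ K'))%N.
Proof.
move=> pK; rewrite /can; case: (leqP (size (cmiQ K)) 1) => // sK.
case: ifP => [_|/negbFE/eqP IK0]; first by case: ifP => _ [<-].
by rewrite Ps_IK0 // => -[<-].
Qed.

End CanonicalForm.

Theorem mainTheorem20 (R : realType) (n : nat) (K : cmi n) :
  pure K -> (degenerate R K <-> odegenerate R (can K)).
Proof.
move=> pK; rewrite (pure_degenerateE R pK).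
case canK: (can K) => [K'|]; last by split=> _; [|apply/can_eq_None].
have nontrivial : (1 < size (cmiQ K))%N.
  by rewrite ltnNge; apply/negP => /can_eq_None; rewrite canK.
have degK' : degenerate R K' <-> (size (cmiQ K') <= 1)%N.
  exact: pure_degenerateE (can_pure pK canK).
split=> [|/degK']; rewrite leqNgt ?nontrivial ?(can_size_gt1 pK canK) //.
Qed.
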